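(* Let $k$ be a difference field of characteristic $0$, $R=k\{y_1,\ldots,y_n\}$, and let $I$ be a monomial $\sigma$-ideal of $R$ with support set $S=\{\mathbf{u}\in\mathbb{N}[x]^n:\mathbf{y}^{\mathbf{u}}\in I\}$ (so $I=\bigoplus_{\mathbf{u}\in S}k\mathbf{y}^{\mathbf{u}}$). Then: (1) $I$ is radical iff for all $m\in\mathbb{N}\setminus\{0\}$ and $\mathbf{u}\in\mathbb{N}[x]^n$, $m\mathbf{u}\in S$ implies $\mathbf{u}\in S$; (2) $I$ is reflexive iff for all $\mathbf{u}\in\mathbb{N}[x]^n$, $x\mathbf{u}\in S$ implies $\mathbf{u}\in S$; (3) $I$ is perfect iff for all nonzero $g\in\mathbb{N}[x]$ and $\mathbf{u}\in\mathbb{N}[x]^n$, $g\mathbf{u}\in S$ implies $\mathbf{u}\in S$; (4) $I$ is prime iff for all $\mathbf{u},\mathbf{v}\in\mathbb{N}[x]^n$, $\mathbf{u}+\mathbf{v}\in S$ implies $\mathbf{u}\in S$ or $\mathbf{v}\in S$.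
   Context: A difference field is a field $k$ with a ring endomorphism $\sigma$; $R=k\{y_1,\ldots,y_n\}$ is the polynomial ring over $k$ in the variables $\sigma^j(y_i)$, with $\sigma$ extended naturally. For $p=\sum_i c_ix^i\in\mathbb{N}[x]$ and $a\in R$, $a^p=\prod_i(\sigma^i(a))^{c_i}$; for $\mathbf{u}\in\mathbb{N}[x]^n$, $\mathbf{y}^{\mathbf{u}}=y_1^{u_1}\cdots y_n^{u_n}$; $\mathbb{N}[x]^n$ is a module over the semiring $\mathbb{N}[x]$ coordinatewise. A $\sigma$-ideal is an ideal $I$ with $\sigma(I)\subseteq I$; monomial if generated by monomials. $I$ is reflexive if $\sigma(a)\in I$ implies $a\in I$; perfect if $a^g\in I$ implies $a\in I$ for every nonzero $g\in\mathbb{N}[x]$; prime means prime as an ideal. *)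

From HB Require Import structures.
From mathcomp Require Import all_boot all_order all_algebra.
From mathcomp Require Import finmap.
From mathcomp.multinomials Require Import monalg.

Set Implicit Arguments.
Unset Strict Implicit.
Unset Printing Implicit Defensive.
Import GRing.Theory.
Local Open Scope ring_scope.

(* The difference polynomial ring  R = k{y_1,...,y_n}  over a field k:
   the commutative polynomial ring over k in the (infinitely many) variables
   sigma^j(y_i), i < n, j in nat, encoded as the variable (i, j). *)
Definition dpoly (k : fieldType) (n : nat) : Type :=
  {malg k[{cmonom ('I_n * nat)%type}]}.

Definition dvar (k : fieldType) (n : nat) (i : 'I_n) (j : nat) : dpoly k n :=
  << ucm (i, j) >>.

Definition dsigma (k : fieldType) (n : nat) (s : {rmorphism k -> k})
  (f : dpoly k n) : dpoly k n :=
  mmap (fun c : k => (s c)%:MP)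
       (fun m : {cmonom ('I_n * nat)%type} =>
          \prod_(ij <- finsupp m) dvar k ij.1 ij.2.+1 ^+ m ij) f.

Definition NXn (n : nat) : Type := 'I_n -> {poly nat}.

(* the monomial y^u = prod_i y_i^(u_i), where for p = sum_j c_j x^j,
   y_i^p = prod_j (sigma^j y_i)^(c_j) *)
Definition ymon (k : fieldType) (n : nat) (u : NXn n) : dpoly k n :=
  \prod_(i < n) \prod_(j < size (u i)) dvar k i j ^+ nth 0%N (polyseq (u i)) j.

(* a^g = prod_i (sigma^i a)^(c_i) for g = sum_i c_i x^i in N[x] *)
Definition dpow (k : fieldType) (n : nat) (s : {rmorphism k -> k})
  (a : dpoly k n) (g : {poly nat}) : dpoly k n :=
  \prod_(i < size g) (iter i (dsigma s) a) ^+ nth 0%N (polyseq g) i.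

Definition is_ideal (R : comNzRingType) (I : R -> Prop) : Prop :=
  [/\ I 0, (forall a b, I a -> I b -> I (a + b)) & (forall r a, I a -> I (r * a))].

Definition is_sigma_ideal (k : fieldType) (n : nat) (s : {rmorphism k -> k})
  (I : dpoly k n -> Prop) : Prop :=
  is_ideal I /\ (forall a, I a -> I (dsigma s a)).

Definition is_monomial_ideal (k : fieldType) (n : nat) (I : dpoly k n -> Prop) : Prop :=
  exists T : NXn n -> Prop, forall f : dpoly k n,
    I f <-> exists (m : nat) (c : 'I_m -> dpoly k n) (w : 'I_m -> NXn n),
      (forall j, T (w j)) /\ f = \sum_(j < m) c j * ymon k (w j).

Definition is_radical (R : comNzRingType) (I : R -> Prop) : Prop :=
  forall (a : R) (m : nat), (0 < m)%N -> I (a ^+ m) -> I a.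

Definition is_reflexive (k : fieldType) (n : nat) (s : {rmorphism k -> k})
  (I : dpoly k n -> Prop) : Prop :=
  forall a, I (dsigma s a) -> I a.

Definition is_perfect (k : fieldType) (n : nat) (s : {rmorphism k -> k})
  (I : dpoly k n -> Prop) : Prop :=
  forall (a : dpoly k n) (g : {poly nat}), g != 0 -> I (dpow s a g) -> I a.

Definition is_prime_ideal (R : comNzRingType) (I : R -> Prop) : Prop :=
  is_ideal I /\ ~ I 1 /\ (forall a b : R, I (a * b) -> I a \/ I b).

Definition supp_set (k : fieldType) (n : nat) (I : dpoly k n -> Prop) (u : NXn n) : Prop :=
  I (ymon k u).

From HB Require Import structures.
From mathcomp Require Import all_boot all_order all_algebra.
From mathcomp Require Import finmap.
From mathcomp.multinomials Require Import monalg.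
From Stdlib Require Import Classical_Prop ClassicalEpsilon.
Import GRing.Theory.
Local Open Scope ring_scope.
Set Implicit Arguments.
Unset Strict Implicit.
Unset Printing Implicit Defensive.

(* A polynomial lies in a monomial ideal iff all its monomials do, and the
   exponent map u |-> y^u turns u + v, m u, x u and g u into y^u y^v, (y^u)^m,
   sigma(y^u) and (y^u)^g; so every criterion is a statement about monomials.
   For radicality and perfectness, suppose a^g lies in I but a monomial y^u of
   a does not.  The closure hypothesis then keeps every power of w = y^(g u)
   out of I, so each monomial of I involves a variable outside the support of
   w: I is contained in the ideal P generated by those variables.  P is prime,
   being the kernel of the substitution killing these variables (the ring of
   difference polynomials is a domain, by Kronecker substitution).  Hence some
   sigma^t(a) with g_t > 0 lies in P, which is absurd because its monomial
   sigma^t(y^u) only involves variables of w.  For primality, a proper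
   monomial ideal that is prime on monomials is the ideal generated by the
   variables it contains. *)

Lemma big_pred1_uniq (R : Type) (idx : R) (op : Monoid.com_law idx)
    (T : eqType) (r : seq T) (F : T -> R) x :
  uniq r -> \big[op/idx]_(y <- r | y == x) F y = if x \in r then F x else idx.
Proof.
move=> r_uniq; case: ifPn => xr; last first.
  by rewrite big1_seq // => y /andP[/eqP ->]; rewrite (negbTE xr).
by rewrite big_mkcond (bigD1_seq x) //= eqxx big1 ?Monoid.mulm1 // => y /negbTE ->.
Qed.

Section PrimePredicate.
Variables (A : pzSemiRingType) (P : pred A).
Hypotheses (P1 : ~~ P 1) (PM : forall x y, P (x * y) -> P x || P y).

Lemma prime_predX x e : P (x ^+ e) -> (0 < e)%N && P x.
Proof.
elim: e => [|e IH]; first by rewrite expr0 (negbTE P1).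
by rewrite exprS => /PM/orP[-> //|/IH/andP[_ ->]].
Qed.

Lemma prime_pred_prod (T : eqType) (r : seq T) (F : T -> A) :
  P (\prod_(i <- r) F i) -> exists2 i, i \in r & P (F i).
Proof.
elim: r => [|i r IH]; first by rewrite big_nil (negbTE P1).
rewrite big_cons => /PM/orP[Pi|/IH[j jr Pj]]; first by exists i; rewrite ?mem_head.
by exists j; rewrite // in_cons jr orbT.
Qed.

End PrimePredicate.

Section Ideal.
Variables (A : comNzRingType) (I : A -> Prop).
Hypothesis I_ideal : is_ideal I.

Lemma idealMl r a : I a -> I (r * a).
Proof. by case: I_ideal => _ _; apply. Qed.

Lemma ideal_sum (T : eqType) (r : seq T) (F : T -> A) :
  (forall i, i \in r -> I (F i)) -> I (\sum_(i <- r) F i).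
Proof.
case: I_ideal => I0 ID _ IF; rewrite big_seq.
by apply: (big_ind I) => // i /IF.
Qed.

End Ideal.

Section Cmonom.
Variable X : choiceType.
Implicit Types (m : {cmonom X}) (x : X).

Lemma cm_prod (T : Type) (r : seq T) (P : pred T) (F : T -> {cmonom X}) x :
  (\big[mmul/mone]_(i <- r | P i) F i) x = (\sum_(i <- r | P i) F i x)%N.
Proof.
by apply: (big_morph (fun m : {cmonom X} => m x)) => [m1 m2|]; rewrite ?cmM ?cm1.
Qed.

Lemma expcmn_big m e : expcmn m e = \big[mmul/mone]_(j < e) m.
Proof.
apply/eqP/cmP => x; rewrite cm_prod sum_nat_const card_ord.
case: e => [|e]; first by rewrite /expcmn /= onecmE.
rewrite /expcmn iteropS; elim: e => [|e IH]; first by rewrite mul1n.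
by rewrite iterS mulcmE IH mulSn.
Qed.

Lemma cm_expcmn m e x : expcmn m e x = (e * m x)%N.
Proof. by rewrite expcmn_big cm_prod sum_nat_const card_ord. Qed.

Lemma cm_le_mdeg m x : (m x <= mdeg m)%N.
Proof. by rewrite mdegE; case: mdomP => // xm; rewrite (big_fsetD1 x) //= leq_addr. Qed.

Lemma cmU_le x m : x \in finsupp m -> forall y, (ucm x y <= m y)%N.
Proof. by move=> xm y; rewrite cmU; case: eqP => [<-|] //; rewrite lt0n cmE_neq0. Qed.

End Cmonom.

Section MonomialAlgebra.
Variables (X : choiceType) (R : nzRingType).
Local Notation M := {cmonom X}.
Local Notation A := {malg R[M]}.

Lemma malgU1M (m1 m2 : M) : << (mmul m1 m2) >> = << m1 >> * << m2 >> :> A.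
Proof. by rewrite malgM_def fgmulUU mulr1. Qed.

Lemma malgU_mulC (c : R) (m : M) : << c *g m >> = c%:MP * << m >> :> A.
Proof. by rewrite malgM_def fgmulUU mulr1 mul1m. Qed.

Lemma malgU1_prod (T : Type) (r : seq T) (P : pred T) (F : T -> M) :
  << \big[mmul/mone]_(i <- r | P i) F i >> = \prod_(i <- r | P i) << F i >> :> A.
Proof. by apply: (big_morph (fun m : M => << m >> : A)) => [m1 m2|]; rewrite ?malgU1M. Qed.

Lemma malgU1_expcmn (m : M) e : << expcmn m e >> = << m >> ^+ e :> A.
Proof. by rewrite expcmn_big malgU1_prod prodr_const card_ord. Qed.

Lemma msupp_sum (T : Type) (r : seq T) (F : T -> A) m :
  m \in msupp (\sum_(i <- r) F i) -> exists i, m \in msupp (F i).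
Proof.
elim: r => [|i r IH]; first by rewrite big_nil msupp0.
rewrite big_cons => /(fsubsetP (msuppD_le _ _)); rewrite inE => /orP[mi|/IH//].
by exists i.
Qed.

End MonomialAlgebra.

Section KroneckerSubstitution.
Variables (X : choiceType) (k : idomainType).
Local Notation M := {cmonom X}.
Local Notation A := {malg k[M]}.

(* Kronecker substitution: the base-B digits of kron_wt D B m are the
   exponents of m at the variables listed in D. *)
Definition kron_wt (D : seq X) (B : nat) (m : M) : nat :=
  foldr (fun x w => m x + B * w)%N 0%N D.

Lemma kron_wtM D B m1 m2 :
  kron_wt D B (mmul m1 m2) = (kron_wt D B m1 + kron_wt D B m2)%N.
Proof. by elim: D => //= x D ->; rewrite cmM mulnDr addnACA. Qed.

Lemma kron_wt1 D B : kron_wt D B mone = 0%N.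
Proof. by elim: D => //= x D ->; rewrite cm1 muln0. Qed.

Lemma kron_wt_inj D B (m1 m2 : M) :
  {in D, forall x, (m1 x < B)%N && (m2 x < B)%N} ->
  kron_wt D B m1 = kron_wt D B m2 -> {in D, m1 =1 m2}.
Proof.
elim: D => // y D IH bnd /= E.
have /andP[m1y m2y] := bnd y (mem_head _ _).
have Ey : m1 y = m2 y.
  move/(congr1 (modn^~ B)): E.
  by rewrite ![(m1 y + _)%N]addnC ![(m2 y + _)%N]addnC !(mulnC B) !modnMDl !modn_small.
move: E; rewrite Ey => /addnI/eqP; rewrite eqn_pmul2l ?(leq_ltn_trans _ m1y) //.
move=> /eqP E x; rewrite in_cons => /predU1P[-> //|xD].
by apply: IH xD => // z zD; apply: bnd; rewrite in_cons zD orbT.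
Qed.

Definition kron (D : seq X) (B : nat) (m : M) : {poly k} := 'X^(kron_wt D B m).

Fact kron_is_mmorphism D B : mmorphism (kron D B).
Proof. by split => [m1 m2|]; rewrite /kron ?kron_wtM ?exprD ?kron_wt1. Qed.

HB.instance Definition _ D B :=
  isMultiplicative.Build M {poly k} (kron D B) (kron_is_mmorphism D B).

Lemma kron_subst_neq0 D B (a : A) :
  a != 0 -> {in msupp a &, injective (kron_wt D B)} ->
  mmap (@polyC k) (kron D B) a != 0.
Proof.
rewrite -msupp_eq0 => /fset0Pn[m0 m0a] inj.
apply/eqP => /(congr1 (fun p : {poly k} => p`_(kron_wt D B m0))).
rewrite mmapE coef_sum coef0 (bigD1_seq m0) ?fset_uniq //= coefCM coefXn eqxx mulr1.
rewrite big1_seq ?addr0 => [|m /andP[m_neq ma]]; first by apply/eqP; rewrite mcoeff_neq0.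
rewrite coefCM coefXn; case: eqP => [/(inj _ _ m0a ma) E|]; last by rewrite mulr0.
by rewrite E eqxx in m_neq.
Qed.

Lemma malg_mulf_neq0 (a b : A) : a != 0 -> b != 0 -> a * b != 0.
Proof.
move=> a_neq0 b_neq0.
pose S := (msupp a ++ msupp b : seq M).
pose D := flatten [seq (finsupp m : seq X) | m : M <- S].
pose B := (\max_(m <- S) mdeg m).+1.
have bnd m x : m \in S -> (m x < B)%N.
  by move=> mS; rewrite ltnS (leq_trans (cm_le_mdeg m x)) // (leq_bigmax_seq _ mS).
have inj : {in S &, injective (kron_wt D B)}.
  move=> m1 m2 m1S m2S E; apply/eqP/cmP => x.
  have [xD|xD] := boolP (x \in D).
    by apply: (kron_wt_inj _ E) => // z _; rewrite !bnd.
  have out m : m \in S -> m x = 0%N.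
    move=> mS; apply/eqP; rewrite cmE_eq0; apply: contra xD => xm.
    by apply/flatten_mapP; exists m.
  by rewrite !out.
have: mmap (@polyC k) (kron D B) (a * b) != 0.
  rewrite rmorphM mulf_neq0 // kron_subst_neq0 // => m1 m2 m1a m2a;
    by apply: inj; rewrite mem_cat ?m1a ?m2a ?orbT.
by apply: contra_neq => ->; rewrite rmorph0.
Qed.

End KroneckerSubstitution.

Section VariableIdeal.
Variables (X : choiceType) (k : idomainType) (V : pred X).
Local Notation M := {cmonom X}.
Local Notation A := {malg k[M]}.
Implicit Types (m : M) (f : A).

Definition meets (m : M) : bool := has V (finsupp m).

(* The ideal generated by the variables in V. *)
Definition vars_ideal (f : A) : bool := all meets (msupp f).

Lemma meetsP m : reflect (exists2 x, x \in finsupp m & V x) (meets m).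
Proof. exact: hasP. Qed.

Lemma meetsM m1 m2 : meets (mmul m1 m2) = meets m1 || meets m2.
Proof.
apply/meetsP/orP => [[x]|[|]/meetsP[x xm Vx]]; last 2 first.
- by exists x; rewrite // mdomD inE xm.
- by exists x; rewrite // mdomD inE xm orbT.
by rewrite mdomD inE => /orP[] xm Vx; [left|right]; apply/meetsP; exists x.
Qed.

Lemma meets1 : meets mone = false.
Proof. by apply/meetsP => -[x]; rewrite mdom1. Qed.

Definition drop_vars (m : M) : A := if meets m then 0 else << m >>.

Fact drop_vars_is_mmorphism : mmorphism drop_vars.
Proof.
split => [m1 m2|]; rewrite /drop_vars ?meets1 // meetsM.
by case: (meets m1); case: (meets m2); rewrite ?mul0r ?mulr0 ?malgU1M.
Qed.

HB.instance Definition _ :=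
  isMultiplicative.Build M A drop_vars drop_vars_is_mmorphism.

Local Notation kill := (mmap (@malgC M k) drop_vars).

Lemma mcoeff_kill f m : (kill f)@_m = if meets m then 0 else f@_m.
Proof.
transitivity (\sum_(m' <- msupp f | m' == m) (if meets m then 0 else f@_m')).
  rewrite mmapE raddf_sum [RHS]big_mkcond /=; apply: eq_bigr => m' _.
  rewrite mcoeffCM /drop_vars; case: eqVneq => [->|m'_neq].
    by case: meets; rewrite ?mcoeff0 ?mcoeffU1 ?eqxx ?mulr0 ?mulr1.
  by case: meets; rewrite ?mcoeff0 ?mcoeffU1 ?(negbTE m'_neq) mulr0.
rewrite big_pred1_uniq ?fset_uniq //; case: msuppP => //.
by case: meets.
Qed.

Lemma kill_eq0 f : (kill f == 0) = vars_ideal f.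
Proof.
apply/eqP/allP => [kf0 m mf|fV]; last first.
  apply/malgP => m; rewrite mcoeff_kill mcoeff0; case: ifPn => // /negbTE nm.
  by apply: mcoeff_outdom; apply: contraFN nm => /fV.
apply: contraT => nm; move: (mcoeff_kill f m); rewrite kf0 mcoeff0 (negbTE nm).
by move/esym/eqP; rewrite mcoeff_eq0 mf.
Qed.

Lemma vars_ideal1 : ~~ vars_ideal 1.
Proof. by rewrite -kill_eq0 rmorph1 oner_eq0. Qed.

Lemma vars_idealM a b : vars_ideal (a * b) -> vars_ideal a || vars_ideal b.
Proof.
rewrite -!kill_eq0 rmorphM /=; apply: contraLR.
by case/norP; apply: malg_mulf_neq0.
Qed.

End VariableIdeal.

Section MonomialIdeal.
Variables (X : choiceType) (k : idomainType).
Local Notation M := {cmonom X}.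
Local Notation A := {malg k[M]}.
Implicit Types (m : M) (f : A).
Variable I : A -> Prop.
Hypothesis I_ideal : is_ideal I.
Hypothesis I_monomial : forall f, I f -> {in msupp f, forall m, I << m >>}.

Lemma monomial_idealP f : I f <-> {in msupp f, forall m, I << m >>}.
Proof.
split=> [|fI]; first exact: I_monomial.
rewrite (monalgE f); apply: (ideal_sum I_ideal) => m mf.
by rewrite malgU_mulC; apply: (idealMl I_ideal); apply: fI.
Qed.

Lemma monomial_ideal_le m m' :
  I << m >> -> (forall x, m x <= m' x)%N -> I << m' >>.
Proof.
move=> Im le_mm'; have -> : m' = mmul m (divcm m' m).
  by apply/eqP/cmP => x; rewrite cmM divcmE subnKC.
by rewrite malgU1M mulrC; apply: (idealMl I_ideal).
Qed.

Lemma monomial_ideal_sub_vars (w : M) :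
  (forall d, (0 < d)%N -> ~ I (<< w >> ^+ d)) ->
  forall f, I f -> vars_ideal [pred x | x \notin finsupp w] f.
Proof.
move=> no_pow f /I_monomial fI; apply/allP => m /fI Im; apply/negPn/negP => nm.
apply: (no_pow (mdeg m).+1 isT); rewrite -malgU1_expcmn.
apply: monomial_ideal_le Im _ => x; rewrite cm_expcmn.
case: (mdomP m x) => // xm.
have xw : x \in finsupp w by apply: contraNT nm => xw; apply/meetsP; exists x.
rewrite (leq_trans (cm_le_mdeg m x)) // (leq_trans (leqnSn _)) //.
by rewrite leq_pmulr // lt0n cmE_neq0.
Qed.

Section PrimeOnMonomials.
Hypothesis I1 : ~ I 1.
Hypothesis I_prime : forall m1 m2, I << mmul m1 m2 >> -> I << m1 >> \/ I << m2 >>.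

Lemma monomial_ideal_var m : I << m >> -> exists2 x, x \in finsupp m & I << ucm x >>.
Proof.
have [d] := ubnP (mdeg m); elim: d m => [m|d IH m]; first by rewrite ltn0; discriminate.
rewrite ltnS => le_md Im.
have [m1|m_neq1] := eqVneq m mone.
  by exfalso; apply: I1; rewrite m1 in Im; exact: Im.
have [x xm] : exists x, x \in finsupp m.
  apply/fset0Pn; apply: contra_neq m_neq1 => supp0.
  by apply/eqP/cmP => y; rewrite cm1; apply/eqP; rewrite cmE_eq0 supp0.
set m' := divcm m (ucm x).
have Em : m = mmul (ucm x) m'.
  by apply/eqP/cmP => y; rewrite cmM divcmE (subnKC (cmU_le xm y)).
have lt_m'd : (mdeg m' < d)%N.
  by move: le_md; rewrite Em mdegM mdegU add1n; exact: id.
move: Im; rewrite {1}Em => /I_prime[Ix|/(IH m' lt_m'd)[y ym' Iy]]; first by exists x.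
by exists y; first rewrite Em mdomD inE ym' orbT.
Qed.

Lemma monomial_prime_ideal : is_prime_ideal I.
Proof.
split; [exact: I_ideal | split => // a b].
(* I is the ideal generated by the variables it contains. *)
pose V : pred X :=
  fun x => if excluded_middle_informative (I << ucm x >>) then true else false.
have VP x : reflect (I << ucm x >>) (V x).
  by rewrite /V; case: excluded_middle_informative => Ix; constructor.
have IV f : I f <-> vars_ideal V f.
  split=> [/I_monomial fI|/allP fV].
    apply/allP => m /fI/monomial_ideal_var[x xm /VP Vx].
    by apply/meetsP; exists x.
  apply/monomial_idealP => m /fV/meetsP[x xm /VP Ix].
  exact: monomial_ideal_le Ix (cmU_le xm).
by move=> /IV/vars_idealM/orP[] /IV; [left|right].
Qed.

End PrimeOnMonomials.

End MonomialIdeal.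

Lemma coefXnM_leq_coefM (g p : {poly nat}) t j :
  ((g`_t)%R * (('X^t * p)`_j)%R <= ((g * p)`_j)%R)%N.
Proof.
rewrite coefXnM coefM; case: ltnP => [_|le_tj]; first by rewrite muln0.
by rewrite (bigD1 (Ordinal (le_tj : (t < j.+1)%N))) //= leq_addr.
Qed.

Lemma natpoly_mulrn_neq0 (g : {poly nat}) d : g != 0 -> (0 < d)%N -> g *+ d != 0.
Proof.
move=> g_neq0 d_gt0; apply: contra_neq g_neq0 => gd0; apply/polyP => j.
have := congr1 (fun p : {poly nat} => p`_j) gd0.
rewrite coefMn coef0 -mulr_natr natn => /eqP.
by rewrite [X in X == _]/(muln _ _) muln_eq0 (eqn0Ngt d) d_gt0 orbF => /eqP.
Qed.

Section DifferenceMonomials.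
Variables (k : fieldType) (n : nat) (s : {rmorphism k -> k}).
Local Notation X := ('I_n * nat)%type.
Local Notation M := {cmonom X}.
Local Notation R := (dpoly k n).
Implicit Types (m : M) (a : R) (u v : NXn n) (g : {poly nat}).

Definition shift m : M :=
  \big[mmul/mone]_(x <- finsupp m) expcmn (ucm (x.1, x.2.+1)) (m x).

Lemma shiftE m i j : shift m (i, j) = if j is j'.+1 then m (i, j') else 0%N.
Proof.
rewrite cm_prod; case: j => [|j].
  by rewrite big1 // => x _; rewrite cm_expcmn cmU xpair_eqE andbF muln0.
transitivity (\sum_(y <- finsupp m | y == (i, j)) m y)%N.
  rewrite [RHS]big_mkcond; apply: eq_bigr => -[i' j'] _ /=.
  by rewrite cm_expcmn cmU !xpair_eqE eqSS; case: ifP; rewrite ?muln1 ?muln0.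
by rewrite big_pred1_uniq ?fset_uniq; case: (mdomP m (i, j)).
Qed.

Lemma shift_inj : injective shift.
Proof.
move=> m1 m2 E; apply/eqP/cmP => -[i j].
by have := shiftE m1 i j.+1; rewrite E shiftE.
Qed.

Lemma dsigmaE a : dsigma s a = \sum_(m <- msupp a) (s a@_m)%:MP * << shift m >>.
Proof.
rewrite /dsigma mmapE; apply: eq_bigr => m _; congr (_ * _).
by rewrite /shift malgU1_prod; apply: eq_bigr => x _; rewrite malgU1_expcmn.
Qed.

Lemma dsigmaU m : dsigma s << m >> = << shift m >>.
Proof. by rewrite dsigmaE msuppU1 big_seq_fset1 mcoeffUU rmorph1 mpolyC1E mul1r. Qed.

Lemma mcoeff_dsigma_shift a m : (dsigma s a)@_(shift m) = s a@_m.
Proof.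
rewrite dsigmaE raddf_sum /=.
transitivity (\sum_(m' <- msupp a | m' == m) s a@_m').
  rewrite [RHS]big_mkcond; apply: eq_bigr => m' _.
  by rewrite mcoeffCM mcoeffU1 (inj_eq shift_inj) mulr_natr mulrb.
by rewrite big_pred1_uniq ?fset_uniq; case: (msuppP a m); rewrite ?rmorph0.
Qed.

Lemma msupp_dsigma a m : m \in msupp a -> shift m \in msupp (dsigma s a).
Proof. by rewrite -!mcoeff_neq0 mcoeff_dsigma_shift fmorph_eq0. Qed.

Definition mon u : M :=
  \big[mmul/mone]_(i < n) \big[mmul/mone]_(j < size (u i))
     expcmn (ucm (i, nat_of_ord j)) ((u i)`_j)%R.

Lemma ymonE u : ymon k u = << mon u >>.
Proof.
rewrite /ymon /mon malgU1_prod; apply: eq_bigr => i _.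
by rewrite malgU1_prod; apply: eq_bigr => j _; rewrite malgU1_expcmn.
Qed.

Lemma monE u i j : mon u (i, j) = (u i)`_j.
Proof.
rewrite cm_prod (bigD1 i isT) /= [X in (_ + X)%N]big1 ?addn0 => [|i' ne_i'i];
  rewrite cm_prod.
  transitivity (\sum_(j' < size (u i) | j' == j :> nat) ((u i)`_j')%R)%N.
    rewrite [RHS]big_mkcond; apply: eq_bigr => j' _.
    by rewrite cm_expcmn cmU xpair_eqE eqxx /=; case: ifP; rewrite ?muln1 ?muln0.
  by rewrite big_ord1_eq; case: ltnP => // le_size; rewrite nth_default.
by rewrite big1 // => j' _; rewrite cm_expcmn cmU xpair_eqE (negbTE ne_i'i) muln0.
Qed.

Lemma eq_mon u v : u =1 v -> mon u = mon v.
Proof. by move=> uv; apply/eqP/cmP => -[i j]; rewrite !monE uv. Qed.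

Lemma mon_surj m : exists u, mon u = m.
Proof.
pose N := (\max_(x <- finsupp m) x.2.+1)%N.
exists (fun i => \poly_(j < N) m (i, j)); apply/eqP/cmP => -[i j].
rewrite monE coef_poly; case: ltnP => // le_Nj.
apply/esym/eqP; rewrite cmE_eq0; apply: contraTN le_Nj => ij_m.
by rewrite -ltnNge (leq_bigmax_seq (F := fun x : X => x.2.+1) _ ij_m isT).
Qed.

Lemma monD u v : mon (fun i => u i + v i) = mmul (mon u) (mon v).
Proof. by apply/eqP/cmP => -[i j]; rewrite cmM !monE coefD. Qed.

Lemma monX u : mon (fun i => 'X * u i) = shift (mon u).
Proof.
by apply/eqP/cmP => -[i j]; rewrite shiftE monE coefXM; case: j => [|j]; rewrite ?monE.
Qed.

Lemma msupp_iter_dsigma a u t : mon u \in msupp a ->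
  mon (fun i => 'X^t * u i) \in msupp (iter t (dsigma s) a).
Proof.
move=> ua; elim: t => [|t IH].
  by rewrite (@eq_mon _ u) // => i; rewrite expr0 mul1r.
rewrite iterS (@eq_mon _ (fun i => 'X * ('X^t * u i))) ?monX ?msupp_dsigma //.
by move=> i; rewrite exprS mulrA.
Qed.

Lemma finsupp_monXn g u t : (0 < (g`_t)%R)%N ->
  {subset finsupp (mon (fun i => 'X^t * u i)) <= finsupp (mon (fun i => g * u i))}.
Proof.
move=> gt_pos [i j]; rewrite -!cmE_neq0 !monE -!lt0n => pos.
by apply: leq_trans (coefXnM_leq_coefM g (u i) t j); rewrite muln_gt0 gt_pos.
Qed.

Lemma eq_ymon u v : u =1 v -> ymon k u = ymon k v.
Proof. by move=> uv; rewrite !ymonE (eq_mon uv). Qed.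

Lemma ymon0 : ymon k (fun _ : 'I_n => 0) = 1.
Proof. by rewrite /ymon big1 // => i _; rewrite size_poly0 big_ord0. Qed.

Lemma ymonD u v : ymon k (fun i => u i + v i) = ymon k u * ymon k v.
Proof. by rewrite !ymonE monD malgU1M. Qed.

Lemma ymon_sum (T : Type) (r : seq T) (F : T -> NXn n) :
  ymon k (fun i => \sum_(t <- r) F t i) = \prod_(t <- r) ymon k (F t).
Proof.
elim: r => [|t r IH]; first by rewrite big_nil -ymon0; apply: eq_ymon => i; rewrite big_nil.
by rewrite big_cons -IH -ymonD; apply: eq_ymon => i; rewrite big_cons.
Qed.

Lemma ymonMn u e : ymon k (fun i => u i *+ e) = ymon k u ^+ e.
Proof.
elim: e => [|e IH]; first by rewrite expr0 -ymon0; apply: eq_ymon => i; rewrite mulr0n.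
by rewrite exprS -IH -ymonD; apply: eq_ymon => i; rewrite mulrS.
Qed.

Lemma ymonX u : ymon k (fun i => 'X * u i) = dsigma s (ymon k u).
Proof. by rewrite !ymonE monX dsigmaU. Qed.

Lemma ymonXn u t : ymon k (fun i => 'X^t * u i) = iter t (dsigma s) (ymon k u).
Proof.
elim: t => [|t IH]; first by apply: eq_ymon => i; rewrite expr0 mul1r.
by rewrite iterS -IH -ymonX; apply: eq_ymon => i; rewrite exprS mulrA.
Qed.

Lemma ymonM g u : ymon k (fun i => g * u i) = dpow s (ymon k u) g.
Proof.
transitivity (ymon k (fun i => \sum_(t < size g) ('X^t * u i) *+ (g`_t)%R)).
  apply: eq_ymon => i; rewrite -{1}[g]coefK poly_def mulr_suml.
  by apply: eq_bigr => t _; rewrite -{1}[(g`_t)%R]natn scaler_nat mulrnAl.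
by rewrite ymon_sum; apply: eq_bigr => t _; rewrite ymonMn ymonXn.
Qed.

Lemma dpowC a e : (0 < e)%N -> dpow s a e%:P = a ^+ e.
Proof.
move=> e_gt0; rewrite /dpow polyseqC.
have -> : (e != 0) = true by rewrite -lt0n.
by rewrite big_ord1.
Qed.

End DifferenceMonomials.

Lemma monomial_ideal_msupp (k : fieldType) (n : nat) (I : dpoly k n -> Prop) :
  is_ideal I -> is_monomial_ideal I ->
  forall f, I f -> {in msupp f, forall m, I << m >>}.
Proof.
move=> I_ideal [T T_gen] f /T_gen[N [c [w [Tw ->]]]] m /msupp_sum[j].
rewrite ymonE => /msuppM_le[m1 [m2 [_]]]; rewrite msuppU1 => /fset1P -> ->.
rewrite malgU1M; apply: (idealMl I_ideal); rewrite -ymonE; apply/T_gen.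
by exists 1%N, (fun _ => 1), (fun _ => w j); rewrite big_ord1 mul1r.
Qed.

Section DifferenceMonomialIdeal.
Variables (k : fieldType) (n : nat) (s : {rmorphism k -> k}).
Local Notation R := (dpoly k n).
Variable I : R -> Prop.
Hypothesis I_ideal : is_ideal I.
Hypothesis I_monomial : forall f, I f -> {in msupp f, forall m, I << m >>}.

Lemma monomial_mem_of_dpow a g (u : NXn n) :
  I (dpow s a g) -> mon u \in msupp a ->
  (forall d, (0 < d)%N -> I (ymon k (fun i => g * u i) ^+ d) -> I (ymon k u)) ->
  I (ymon k u).
Proof.
move=> Ia ua closed; apply: NNPP => Iu.
set w := mon (fun i => g * u i).
have no_pow d : (0 < d)%N -> ~ I (<< w >> ^+ d).
  by move=> d_gt0; rewrite -ymonE => /(closed d d_gt0).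
have := monomial_ideal_sub_vars I_ideal I_monomial no_pow Ia.
case/(prime_pred_prod (vars_ideal1 _ _) (@vars_idealM _ _ _)) => t _.
case/(prime_predX (vars_ideal1 _ _) (@vars_idealM _ _ _))/andP => gt_pos.
move/allP/(_ _ (msupp_iter_dsigma s t ua))/meetsP => [x /(finsupp_monXn gt_pos) xw].
by rewrite inE xw.
Qed.

Lemma radical_monomial_ideal :
  (forall e u, (0 < e)%N -> I (ymon k (fun i => u i *+ e)) -> I (ymon k u)) ->
  is_radical I.
Proof.
move=> closed a e e_gt0 Iae; apply/(monomial_idealP I_ideal I_monomial) => m.
have [u <-] := mon_surj m => ua; rewrite -ymonE.
apply: (@monomial_mem_of_dpow a e%:P); rewrite ?dpowC // => d d_gt0.
rewrite (ymonM s) dpowC // -exprM -ymonMn; apply: closed.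
by rewrite muln_gt0 e_gt0.
Qed.

Lemma reflexive_monomial_ideal :
  (forall u, I (ymon k (fun i => 'X * u i)) -> I (ymon k u)) -> is_reflexive s I.
Proof.
move=> closed a Isa; apply/(monomial_idealP I_ideal I_monomial) => m.
have [u <-] := mon_surj m => ua; rewrite -ymonE; apply: closed.
by rewrite ymonE monX; apply: I_monomial Isa _ (msupp_dsigma s ua).
Qed.

Lemma perfect_monomial_ideal :
  (forall g u, g != 0 -> I (ymon k (fun i => g * u i)) -> I (ymon k u)) ->
  is_perfect s I.
Proof.
move=> closed a g g_neq0 Iag; apply/(monomial_idealP I_ideal I_monomial) => m.
have [u <-] := mon_surj m => ua; rewrite -ymonE.
apply: (monomial_mem_of_dpow Iag ua) => d d_gt0.
rewrite -ymonMn (@eq_ymon _ _ _ (fun i => (g *+ d) * u i)) => [|i].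
  by apply: closed; rewrite natpoly_mulrn_neq0.
by rewrite mulrnAl.
Qed.

Lemma prime_monomial_ideal :
  ~ I 1 ->
  (forall u v, I (ymon k (fun i => u i + v i)) -> I (ymon k u) \/ I (ymon k v)) ->
  is_prime_ideal I.
Proof.
move=> I1 closed; apply: (monomial_prime_ideal I_ideal I_monomial I1) => m1 m2.
have [u <-] := mon_surj m1; have [v <-] := mon_surj m2.
by rewrite -monD -!ymonE; apply: closed.
Qed.

End DifferenceMonomialIdeal.

Theorem proposition3p6 (k : fieldType) (s : {rmorphism k -> k}) (n : nat)
  (I : dpoly k n -> Prop) :
  [pchar k] =i pred0 ->
  is_sigma_ideal s I -> is_monomial_ideal I ->
  let S := supp_set I in
  [/\ (is_radical I <->
        forall (m : nat) (u : NXn n), (0 < m)%N ->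
          S (fun i => u i *+ m) -> S u),
      (is_reflexive s I <->
        forall u : NXn n, S (fun i => 'X * u i) -> S u),
      (is_perfect s I <->
        forall (g : {poly nat}) (u : NXn n), g != 0 ->
          S (fun i => g * u i) -> S u)
    & (~ I 1 ->
       (is_prime_ideal I <->
        forall u v : NXn n, S (fun i => u i + v i) -> S u \/ S v))].
Proof.
move=> _ [I_ideal _] /(monomial_ideal_msupp I_ideal) I_monomial S.
split.
- split=> [I_rad m u m_gt0|]; last exact: radical_monomial_ideal.
  by rewrite /S /supp_set ymonMn => /I_rad; apply.
- split=> [I_refl u|]; last exact: reflexive_monomial_ideal.
  by rewrite /S /supp_set (ymonX s) => /I_refl.
- split=> [I_perf g u g_neq0|]; last exact: perfect_monomial_ideal.
  by rewrite /S /supp_set (ymonM s) => /I_perf; apply.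
- move=> I1; split=> [[_ [_ I_prime]] u v|]; last exact: prime_monomial_ideal.
  by rewrite /S /supp_set ymonD => /I_prime.
Qed.
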